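(* Let $\ell,\ell'$ be nondegenerate Hermitian forms on complex $n$-dimensional spaces $W,W'$, and let $A:W\to W$, $A':W'\to W'$ be nonsingular antilinear operators that are $\ell$-self-adjoint and $\ell'$-self-adjoint respectively. If the pairs $(\ell,A^2)$ and $(\ell',A'^2)$ are equivalent (i.e. there is a linear isomorphism $\varphi:W\to W'$ with $\ell'(\varphi v,\varphi w)=\ell(v,w)$ and $\varphi A^2=A'^2\varphi$; equivalently they have the same Gohberg--Lancaster--Rodman canonical form), then $(\ell,A)$ and $(\ell',A')$ are equivalent (there is a linear isomorphism $\psi:W\to W'$ with $\ell'(\psi v,\psi w)=\ell(v,w)$ and $\psi A=A'\psi$). In other words, for nonsingular $A$ the canonical form of $(\ell,A)$ given by the simultaneous canonical form theorem is determined by the canonical form of the pair $(\ell,A^2)$.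
   Context: An antilinear operator satisfies $A(zv+w)=\bar z Av+Aw$. Hermitian forms are linear in the first argument and conjugate-linear in the second. $A$ is $\ell$-self-adjoint if $\ell(Av,w)=\ell(Aw,v)$ for all $v,w$; then $A^2$ is a linear $\ell$-self-adjoint operator (i.e. $\ell(A^2v,w)=\ell(v,A^2w)$). The Gohberg--Lancaster--Rodman canonical form classifies pairs (nondegenerate Hermitian form, self-adjoint linear operator) up to simultaneous change of basis. *)

(* Complex n-dimensional space W = 'rV[C]_n, with C any
   numClosedFieldType (algebraically closed field with conjugation, e.g. algC). *)
From HB Require Import structures.
From mathcomp Require Import all_boot all_order all_algebra.
Set Implicit Arguments. Unset Strict Implicit. Unset Printing Implicit Defensive.
Import Order.TTheory GRing.Theory Num.Theory.
Local Open Scope ring_scope.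

Section Defs.
Variables (C : numClosedFieldType) (n : nat).
Local Notation W := 'rV[C]_n.

Definition sesq_hermitian (l : W -> W -> C) : Prop :=
  (forall (a : C) (u v w : W), l (a *: u + v) w = a * l u w + l v w) /\
  (forall v w : W, l v w = Num.conj (l w v)).

Definition sesq_nondegenerate (l : W -> W -> C) : Prop :=
  forall v : W, (forall w : W, l v w = 0) -> v = 0.

Definition is_antilinear (A : W -> W) : Prop :=
  forall (z : C) (v w : W), A (z *: v + w) = Num.conj z *: A v + A w.

Definition op_nonsingular (A : W -> W) : Prop :=
  forall v : W, A v = 0 -> v = 0.

Definition l_self_adjoint (l : W -> W -> C) (A : W -> W) : Prop :=
  forall v w : W, l (A v) w = l (A w) v.

Definition pair_equiv (l : W -> W -> C) (B : W -> W)
    (l' : W -> W -> C) (B' : W -> W) : Prop :=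
  exists P : 'M[C]_n, P \in unitmx /\
    (forall v w : W, l' (v *m P) (w *m P) = l v w) /\
    (forall v : W, B v *m P = B' (v *m P)).
End Defs.

From HB Require Import structures.
From mathcomp Require Import all_boot all_order all_algebra.
From mathcomp Require Import ring.
Set Implicit Arguments. Unset Strict Implicit. Unset Printing Implicit Defensive.
Import Order.TTheory GRing.Theory Num.Theory.
Local Open Scope ring_scope.
Local Notation "X ^c" := (map_mx Num.conj X).

(* Write A v = v^c M and, after transporting A' to W along the given isometry, B v = v^c N.
   Then A^2 = B^2 reads N^c N = M^c M, so U := M^-1 N is an l-isometry with twist(U) U = 1,
   where twist X := M^-1 X^c M.  Take for V the principal square root of U, realised as a
   polynomial in U by interpolation and Newton iteration modulo the characteristic polynomial.
   The principal branch commutes with z |-> 1/z^*, so twist(V) acts as V^-1 on every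
   eigenvector of U; both being polynomials in U, twist(V) V = 1.  Hence V is an l-isometry
   with M V = V^c N, i.e. V intertwines A and B. *)

(* sqrtC takes values in the cone {Im >= 0} minus the negative reals (sqrCK_P), which is
   stable under multiplication by positive reals such as 1/|w|^2. *)
Lemma sqrtC_conjV (C : numClosedFieldType) (z : C) :
  sqrtC ((z^*)^-1) = ((sqrtC z)^*)^-1.
Proof.
have [->|z0] := eqVneq z 0; first by rewrite conjC0 invr0 sqrtC0 conjC0 invr0.
set w := sqrtC z; have w0 : w != 0 by rewrite sqrtC_eq0.
have -> : (z^*)^-1 = (((w^*)^-1) ^+ 2) by rewrite -[in LHS](sqrtCK z) -/w rmorphXn exprVn.
have /sqrCK_P/andP[Imw Nw] : sqrtC (w ^+ 2) = w by rewrite sqrtCK.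
have t_gt0 : 0 < (w * w^*)^-1 by rewrite invr_gt0 mul_conjC_gt0.
have t_real : (w * w^*)^-1 \is Num.real by apply: gtr0_real.
have -> : (w^*)^-1 = w * (w * w^*)^-1 by rewrite invfM mulrA divff // mul1r.
apply/sqrCK_P; rewrite (ImMr t_real) pmulr_lge0 // Imw /=.
by rewrite pmulr_llt0.
Qed.

Lemma poly_interpolation (F : fieldType) (s : seq F) (g : F -> F) :
  exists p : {poly F}, {in s, forall x, p.[x] = g x}.
Proof.
elim: s => [|a s [p IHp]]; first by exists 0.
have [as_|as_N] := boolP (a \in s).
  by exists p => x; rewrite inE => /predU1P[->|]; apply: IHp.
pose P := \prod_(b <- s) ('X - b%:P).
have Pa : P.[a] != 0 by rewrite -/(root P a) root_prod_XsubC.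
exists (p + ((g a - p.[a]) / P.[a]) *: P) => x; rewrite inE hornerD hornerZ.
case/predU1P=> [->|xs]; first by rewrite mulfVK // addrC subrK.
have /rootP -> : root P x by rewrite root_prod_XsubC.
by rewrite mulr0 addr0 IHp.
Qed.

Lemma prod_XsubC_dvdp_exp (F : fieldType) (d : {poly F}) (s : seq F) :
  {in s, forall z, root d z} -> \prod_(z <- s) ('X - z%:P) %| d ^+ size s.
Proof.
elim: s => [|a s IHs] ds; first by rewrite big_nil dvd1p.
rewrite big_cons exprS dvdp_mul ?IHs -?root_factor_theorem ?ds ?mem_head //.
by move=> z zs; rewrite ds // inE zs orbT.
Qed.

Section HornerMx.
Variables (F : closedFieldType) (n : nat) (U : 'M[F]_n.+1).
Local Notation hU := (horner_mx U).

Lemma horner_mx_eigen (v : 'rV_n.+1) a p :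
  v *m U = a *: v -> v *m hU p = p.[a] *: v.
Proof.
move=> vU; elim/poly_ind: p => [|p c IHp].
  by rewrite rmorph0 mulmx0 horner0 scale0r.
rewrite rmorphD rmorphM /= horner_mx_X horner_mx_C -mulmxE mulmxDr mulmxA IHp.
by rewrite -scalemxAl vU scalerA mul_mx_scalar hornerMXaddC scalerDl.
Qed.

Lemma horner_mx_inverse q : {in eigenvalue U, forall a, q.[a] != 0} ->
  exists u, hU u * hU q = 1 /\ {in eigenvalue U, forall a, u.[a] * q.[a] = 1}.
Proof.
move=> qU; have: coprimep q (char_poly U).
  apply/negPn/negP => /closed_rootP[a]; rewrite root_gcd => /andP[/rootP qa].
  by rewrite -eigenvalue_root_char => /qU; rewrite qa eqxx.
case/Bezout_eq1_coprimepP => -[u v] /= uv1; exists u; split.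
  have := congr1 hU uv1; rewrite rmorphD !rmorphM /= Cayley_Hamilton mulr0 addr0.
  by rewrite rmorph1.
move=> a aU; have /rootP chi_a : root (char_poly U) a by rewrite -eigenvalue_root_char.
by have := congr1 (horner^~ a) uv1; rewrite /= hornerD !hornerM chi_a mulr0 addr0 hornerC.
Qed.

Lemma horner_mx_nilpotent d : {in eigenvalue U, forall a, d.[a] = 0} ->
  exists N, hU d ^+ N = 0.
Proof.
move=> dU; have [rs chiE] := closed_field_poly_normal (char_poly U).
rewrite (monicP (char_poly_monic U)) scale1r in chiE.
have : char_poly U %| d ^+ size rs.
  rewrite chiE prod_XsubC_dvdp_exp // => z zs; apply/rootP/dU.
  by rewrite [_ \in _]eigenvalue_root_char chiE root_prod_XsubC.
case/dvdpP=> q dq; exists (size rs).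
by rewrite -rmorphXn /= dq rmorphM /= Cayley_Hamilton mulr0.
Qed.

Lemma horner_mx_sqr_inj p q : hU p ^+ 2 = hU q ^+ 2 ->
  {in eigenvalue U, forall a, p.[a] + q.[a] != 0} -> hU p = hU q.
Proof.
move=> pq2 pqU; have [|u [u1 _]] := @horner_mx_inverse (p + q).
  by move=> a /pqU; rewrite hornerD.
apply/eqP; rewrite -subr_eq0.
have -> : hU p - hU q = hU u * hU ((p + q) * (p - q)).
  by rewrite rmorphM /= mulrA u1 mul1r rmorphB.
by rewrite mulrC -subr_sqr rmorphB !rmorphXn /= pq2 subrr mulr0.
Qed.
End HornerMx.

Section HornerMxSqrt.
Variables (F : closedFieldType) (n : nat) (U : 'M[F]_n.+1) (r : F -> F).
Hypotheses (two_neq0 : 2%:R != 0 :> F) (rK : forall a, r a ^+ 2 = a).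
Hypothesis U_unit : U \in unitmx.
Local Notation hU := (horner_mx U).

Definition spectral_root (p : {poly F}) := {in eigenvalue U, forall a, p.[a] = r a}.

Lemma eigenvalue_unit_neq0 a : eigenvalue U a -> a != 0.
Proof.
case/eigenvalueP=> v vU; apply: contraNneq => a0.
by rewrite -[v](mulmxK U_unit) vU a0 scale0r mul0mx.
Qed.

Lemma spectral_root_neq0 p : spectral_root p -> {in eigenvalue U, forall a, p.[a] != 0}.
Proof.
move=> rp a aU; rewrite rp //; apply: contraTneq (eigenvalue_unit_neq0 aU) => ra0.
by rewrite -(rK a) ra0 expr0n eqxx.
Qed.

(* The Newton step p |-> (p + X/p)/2, with 1/p computed modulo char_poly U. *)
Lemma spectral_root_newton p : spectral_root p ->
  exists2 p', spectral_root p' & exists w, hU (p' ^+ 2 - 'X) = hU ((p ^+ 2 - 'X) ^+ 2 * w).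
Proof.
move=> rp; have [u [up1 up1U]] := horner_mx_inverse (spectral_root_neq0 rp).
pose c : F := 2%:R^-1.
exists (c%:P * (p + 'X * u)).
  move=> a aU; rewrite hornerM hornerC hornerD hornerM hornerX rp //.
  have -> : a * u.[a] = r a.
    rewrite -{1}(rK a).
    by rewrite expr2 -mulrA -[X in _ * (X * _)](rp a aU) [p.[a] * _]mulrC up1U // mulr1.
  by rewrite /c; field.
have c2 : c%:P ^+ 2 * 4%:R = 1 :> {poly F}.
  by rewrite -polyC_natr -rmorphXn -polyCM /c; congr _%:P; field.
have ht : hU (1 - p * u) = 0.
  by rewrite rmorphB rmorph1 mulrC rmorphM /= up1 subrr.
exists (c%:P ^+ 2 * u ^+ 2).
have -> : (c%:P * (p + 'X * u)) ^+ 2 - 'X = (p ^+ 2 - 'X) ^+ 2 * (c%:P ^+ 2 * u ^+ 2)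
    + (1 - p * u) * (c%:P ^+ 2 * (p ^+ 2 * (1 + p * u) - 2%:R * 'X * (p * u + 2%:R)))
    + (c%:P ^+ 2 * 4%:R - 1) * 'X by ring.
by rewrite c2 subrr mul0r addr0 rmorphD [X in _ + X]rmorphM /= ht mul0r addr0.
Qed.

Lemma horner_mx_sqrt : exists2 p, hU p ^+ 2 = U & spectral_root p.
Proof.
have [rs chiE] := closed_field_poly_normal (char_poly U).
rewrite (monicP (char_poly_monic U)) scale1r in chiE.
have [p0 p0E] := poly_interpolation rs r.
have rp0 : spectral_root p0.
  by move=> a aU; apply: p0E; rewrite -root_prod_XsubC -chiE -eigenvalue_root_char.
pose d0 := p0 ^+ 2 - 'X.
have newton k : exists2 p, spectral_root p & exists z, hU (p ^+ 2 - 'X) = hU (d0 ^+ (2 ^ k) * z).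
  elim: k => [|k [p rp [z pz]]]; first by exists p0 => //; exists 1; rewrite mulr1.
  have [p' rp' [w p'w]] := spectral_root_newton rp.
  exists p' => //; exists (z ^+ 2 * w).
  rewrite p'w rmorphM rmorphXn /= pz -rmorphXn -rmorphM /=.
  by congr (hU _); rewrite expnSr exprM; ring.
have [N d0N] : exists N, hU d0 ^+ N = 0.
  by apply: horner_mx_nilpotent => a aU; rewrite !hornerE rp0 // rK subrr.
have [p rp [z pz]] := newton N; exists p => //.
apply/eqP; rewrite -subr_eq0 -[X in _ - X]horner_mx_X -rmorphXn -rmorphB /= pz.
by rewrite rmorphM rmorphXn /= -(subnK (ltnW (ltn_expl N (ltnSn 1)))) exprD d0N mulr0 mul0r.
Qed.
End HornerMxSqrt.

Section HermitianForm.
Variables (C : numClosedFieldType) (n : nat) (l : 'rV[C]_n -> 'rV[C]_n -> C).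
Hypothesis l_herm : sesq_hermitian l.

Lemma formDl u v w : l (u + v) w = l u w + l v w.
Proof. by have := l_herm.1 1 u v w; rewrite scale1r mul1r. Qed.

Lemma form0l w : l 0 w = 0.
Proof. by apply: (addrI (l 0 w)); rewrite -formDl !addr0. Qed.

Lemma formZl a u w : l (a *: u) w = a * l u w.
Proof. by have := l_herm.1 a u 0 w; rewrite !addr0 form0l addr0. Qed.

Lemma formZDr u a v w : l u (a *: v + w) = a^* * l u v + l u w.
Proof. by rewrite l_herm.2 l_herm.1 rmorphD rmorphM /= -!l_herm.2. Qed.
End HermitianForm.

Lemma conj_mxK (C : numClosedFieldType) k1 k2 (X : 'M[C]_(k1, k2)) : X^c^c = X.
Proof. by apply/matrixP => i j; rewrite !mxE conjCK. Qed.

Section Twist.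
Variables (C : numClosedFieldType) (m : nat) (M : 'M[C]_m.+1).
Hypothesis M_unit : M \in unitmx.

(* If [A v = v^c *m M], then [A (v *m X) = A v *m twist X]. *)
Definition twist (X : 'M[C]_m.+1) := invmx M *m X^c *m M.

Lemma twistM X Y : twist (X *m Y) = twist X *m twist Y.
Proof. by rewrite /twist map_mxM !mulmxA mulmxK. Qed.

Lemma twistD X Y : twist (X + Y) = twist X + twist Y.
Proof. by rewrite /twist map_mxD mulmxDr mulmxDl. Qed.

Lemma twist_scalar a : twist a%:M = (a^*)%:M.
Proof. by rewrite /twist map_scalar_mx mul_mx_scalar -scalemxAl mulVmx // scalemx1. Qed.

Lemma twist_eigenE (v : 'rV_m.+1) X b :
  (v *m twist X == b^* *: v) = ((v *m invmx M)^c *m X == b *: (v *m invmx M)^c).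
Proof.
set w := (v *m invmx M)^c.
have -> : v = w^c *m M by rewrite conj_mxK mulmxKV.
rewrite /twist !mulmxA mulmxK // -map_mxM scalemxAl -map_mxZ.
by rewrite (can_eq (mulmxK M_unit)) (inj_eq map_mx_inj).
Qed.
End Twist.

Section SqrEquiv.
Variables (C : numClosedFieldType) (m : nat) (l : 'rV[C]_m.+1 -> 'rV[C]_m.+1 -> C).
Hypothesis l_herm : sesq_hermitian l.
Variables M N : 'M[C]_m.+1.
Hypotheses (M_unit : M \in unitmx) (NM : N^c *m N = M^c *m M).
Hypothesis M_sa : forall v w, l (v^c *m M) w = l (w^c *m M) v.
Hypothesis N_sa : forall v w, l (v^c *m N) w = l (w^c *m N) v.

Local Notation U := (invmx M *m N).
Local Notation tau := (twist M).
Local Notation hU := (horner_mx U).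

Lemma twistU : tau U *m U = 1%:M.
Proof.
have Mc_unit : M^c \in unitmx by rewrite map_unitmx.
rewrite /twist map_mxM map_invmx !mulmxA mulmxK // -(mulmxA _ N^c) NM mulmxA.
by rewrite mulmxKV // mulVmx.
Qed.

Lemma U_unit : U \in unitmx.
Proof. by case: (mulmx1_unit twistU). Qed.

Lemma twist_horner p : exists q, tau (hU p) = hU q.
Proof.
have [|u [uX _]] := @horner_mx_inverse _ _ U 'X.
  by move=> a /(eigenvalue_unit_neq0 U_unit); rewrite hornerX.
have uU : hU u = tau U.
  rewrite horner_mx_X in uX.
  by rewrite -[hU u]mulmx1 -(mulmx1C twistU) mulmxA mulmxE uX mul1r.
elim/poly_ind: p => [|p c [q qE]].
  by exists 0; rewrite !rmorph0 /twist map_mx0 mulmx0 mul0mx.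
exists (q * u + (c^*)%:P).
rewrite !rmorphD !rmorphM /= !horner_mx_C horner_mx_X -!mulmxE twistD // twistM //.
by rewrite qE uU twist_scalar.
Qed.

Lemma form_mulU x y : l (x *m U) (y *m U) = l x y.
Proof.
pose xb := (x *m invmx M)^c; pose yb := (y *m invmx M)^c.
have xE : x = xb^c *m M by rewrite conj_mxK mulmxKV.
have yE : y = yb^c *m M by rewrite conj_mxK mulmxKV.
rewrite xE yE !mulmxA !mulmxK // N_sa map_mxM conj_mxK -mulmxA NM mulmxA.
have -> : yb *m M^c = (yb^c *m M)^c by rewrite map_mxM conj_mxK.
exact: M_sa.
Qed.

Lemma form_horner_adj p x y : l (x *m hU p) y = l x (y *m tau (hU p)).
Proof.
elim/poly_ind: p x y => [|p c IHp] x y.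
  by rewrite rmorph0 /twist map_mx0 !(mulmx0, mul0mx) form0l // l_herm.2 form0l ?conjC0.
rewrite rmorphD rmorphM /= horner_mx_C horner_mx_X -mulmxE twistD // twistM // twist_scalar //.
rewrite !mulmxDr !mul_mx_scalar formDl // formZl // mulmxA.
have -> : l (x *m hU p *m U) y = l (x *m hU p) (y *m tau U).
  by rewrite -[in RHS]form_mulU -(mulmxA y) twistU mulmx1.
have twist_comm : tau U *m tau (hU p) = tau (hU p) *m tau U.
  by rewrite -!twistM // (comm_mx_horner _ (erefl (U *m U))).
by rewrite IHp -mulmxA twist_comm [in RHS]addrC formZDr // conjCK addrC.
Qed.

Section Root.
Variable p : {poly C}.
Hypotheses (pU : hU p ^+ 2 = U) (rp : spectral_root U sqrtC p).
Local Notation V := (hU p).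

Lemma twist_root_eigen (w : 'rV_m.+1) a :
  w *m U = a *: w -> w != 0 -> w *m tau V = (sqrtC a)^-1 *: w.
Proof.
move=> wU w0; have aU : eigenvalue U a by apply/eigenvalueP; exists w.
have a0 := eigenvalue_unit_neq0 U_unit aU.
pose wb := (w *m invmx M)^c.
have wb0 : wb != 0.
  apply: contraNneq w0 => /(congr1 (map_mx Num.conj)); rewrite conj_mxK map_mx0 => wM0.
  by rewrite -(mulmxKV M_unit w) wM0 mul0mx.
have wtU : w *m tau U = a^-1 *: w.
  have awU : a *: (w *m tau U) = w.
    by rewrite scalemxAl -wU -mulmxA (mulmx1C twistU) mulmx1.
  by rewrite -[in RHS]awU scalerA mulVf ?scale1r.
have /eqP : w *m tau U = ((a^*)^-1)^* *: w by rewrite fmorphV /= conjCK.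
rewrite (twist_eigenE M_unit) -/wb => /eqP wbU.
have wbU' : eigenvalue U (a^*)^-1 by apply/eigenvalueP; exists wb.
have -> : (sqrtC a)^-1 = (((sqrtC a)^*)^-1)^* by rewrite fmorphV /= conjCK.
apply/eqP; rewrite (twist_eigenE M_unit) -/wb.
by rewrite (horner_mx_eigen _ wbU) rp // sqrtC_conjV.
Qed.

Lemma twist_root_mulmx : tau V *m V = 1%:M.
Proof.
have [q qE] := twist_horner p.
have VtV : tau V *m V = hU (q * p) by rewrite rmorphM /= -qE.
have qp1 : {in eigenvalue U, forall a, (q * p).[a] = 1}.
  move=> a aU; have /eigenvalueP[w wU w0] := aU; apply/eqP; rewrite -subr_eq0.
  have : w *m hU (q * p) = w.
    rewrite -VtV mulmxA (twist_root_eigen wU w0) -scalemxAl (horner_mx_eigen _ wU) rp //.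
    by rewrite scalerA mulVf ?scale1r // sqrtC_eq0 (eigenvalue_unit_neq0 U_unit).
  rewrite (horner_mx_eigen _ wU) -{2}[w]scale1r => /eqP; rewrite -subr_eq0 -scalerBl.
  by rewrite scaler_eq0 (negbTE w0) orbF.
have VtVC : V *m tau V = tau V *m V.
  by rewrite qE mulmxE -!rmorphM mulrC.
rewrite VtV -[1%:M](rmorph1 hU); apply: horner_mx_sqr_inj.
  have VV : V *m V = U by rewrite mulmxE -expr2.
  rewrite rmorph1 expr1n -VtV expr2 -mulmxE mulmxA -(mulmxA (tau V)) VtVC mulmxA.
  by rewrite -twistM // -mulmxA VV twistU.
by move=> a aU; rewrite qp1 // hornerC -(natrD _ 1 1) pnatr_eq0.
Qed.
End Root.

Lemma sqr_eq_mx_equiv :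
  exists2 V, V \in unitmx & (forall x y, l (x *m V) (y *m V) = l x y) /\ M *m V = V^c *m N.
Proof.
have two_neq0 : 2%:R != 0 :> C by rewrite pnatr_eq0.
have [p pU rp] := horner_mx_sqrt two_neq0 (@sqrtCK C) U_unit.
have VtV := twist_root_mulmx pU rp; set V := hU p in pU VtV *.
have VVt : V *m tau V = 1%:M := mulmx1C VtV.
exists V; first by case: (mulmx1_unit VtV).
split=> [x y|]; first by rewrite form_horner_adj -mulmxA VVt mulmx1.
have McV : V^c *m M = M *m tau V by rewrite /twist !mulmxA mulmxV // mul1mx.
have -> : N = M *m (V *m V) by rewrite mulmxE -expr2 pU -mulmxE mulmxA mulmxV // mul1mx.
by rewrite !mulmxA McV -(mulmxA M) VtV mulmx1.
Qed.
End SqrEquiv.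

Lemma antilinear_mx (C : numClosedFieldType) n (A : 'rV[C]_n -> 'rV[C]_n) :
  is_antilinear A -> exists M, forall v, A v = v^c *m M.
Proof.
move=> aA; have A0 : A 0 = 0.
  by have := aA 1 0 0; rewrite scale1r addr0 rmorph1 scale1r -{1}[A 0]addr0 => /addrI <-.
have AD v w : A (v + w) = A v + A w by rewrite -[v]scale1r aA rmorph1 !scale1r.
exists (\matrix_(i < n) A (delta_mx 0 i)) => v.
rewrite [in LHS](row_sum_delta v) (big_morph A AD A0) mulmx_sum_row.
by apply: eq_bigr => i _; rewrite -[_ *: _]addr0 aA A0 addr0 mxE rowK.
Qed.

Lemma pair_equiv_trans (C : numClosedFieldType) n (l1 l2 l3 : 'rV[C]_n -> 'rV[C]_n -> C)
    (B1 B2 B3 : 'rV[C]_n -> 'rV[C]_n) :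
  pair_equiv l1 B1 l2 B2 -> pair_equiv l2 B2 l3 B3 -> pair_equiv l1 B1 l3 B3.
Proof.
move=> [P [P_unit [Piso PB]]] [Q [Q_unit [Qiso QB]]].
exists (P *m Q); split; first by rewrite unitmx_mul P_unit.
by split=> [v w|v]; rewrite !mulmxA ?Qiso ?Piso // PB QB.
Qed.

Lemma sqr_eq_pair_equiv (C : numClosedFieldType) n (l : 'rV[C]_n -> 'rV[C]_n -> C)
    (A B : 'rV[C]_n -> 'rV[C]_n) :
  sesq_hermitian l -> is_antilinear A -> op_nonsingular A -> l_self_adjoint l A ->
  is_antilinear B -> l_self_adjoint l B -> A \o A =1 B \o B -> pair_equiv l A l B.
Proof.
case: n l A B => [|m] l A B l_herm aA nA sA aB sB AB.
  exists 1%:M; split; first exact: unitmx1.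
  by split=> [v w|v]; rewrite !mulmx1 //; apply/matrixP => i [].
have [M AM] := antilinear_mx aA; have [N BN] := antilinear_mx aB.
have M_unit : M \in unitmx.
  rewrite -row_free_unit; apply: inj_row_free => v vM0.
  have /(congr1 (map_mx Num.conj)) : v^c = 0 by apply: nA; rewrite AM conj_mxK.
  by rewrite conj_mxK map_mx0.
have NM : N^c *m N = M^c *m M.
  apply/eqP/mulmxP => v; have := AB v.
  by rewrite /= AM BN AM BN !map_mxM conj_mxK !mulmxA.
have [||V V_unit [Viso MV]] := sqr_eq_mx_equiv l_herm M_unit NM.
- by move=> v w; rewrite -!AM sA.
- by move=> v w; rewrite -!BN sB.
exists V; split=> //; split=> // v.
by rewrite AM BN -mulmxA MV mulmxA -map_mxM.
Qed.

Theorem mainTheorem2 (C : numClosedFieldType) (n : nat)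
    (l l' : 'rV[C]_n -> 'rV[C]_n -> C) (A A' : 'rV[C]_n -> 'rV[C]_n) :
  sesq_hermitian l -> sesq_nondegenerate l ->
  sesq_hermitian l' -> sesq_nondegenerate l' ->
  is_antilinear A -> op_nonsingular A -> l_self_adjoint l A ->
  is_antilinear A' -> op_nonsingular A' -> l_self_adjoint l' A' ->
  pair_equiv l (A \o A) l' (A' \o A') ->
  pair_equiv l A l' A'.
Proof.
move=> l_herm _ _ _ aA nA sA aA' _ sA' [P [P_unit [Piso PA2]]].
pose B v := A' (v *m P) *m invmx P.
have BP v : B v *m P = A' (v *m P) by rewrite mulmxKV.
apply: (@pair_equiv_trans _ _ _ l _ _ B); last by exists P.
apply: sqr_eq_pair_equiv => // [z v w|v w|v].
- by rewrite /B mulmxDl -scalemxAl aA' mulmxDl -scalemxAl.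
- by rewrite -!Piso !BP sA'.
- by apply: (canRL (mulmxK P_unit)); rewrite BP PA2.
Qed.
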